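(* Let $n,x$ be integers with $1<x<n$, so that $G=C_{2n}(x,1,n)$ is a $5$-regular circulant graph. If $n\equiv 2 \pmod 3$, $x\equiv 1\pmod 3$ and $x<\tfrac{n}{2}$, then $G$ is word-representable.
   Context: Two distinct letters $x,y$ alternate in a word $w$ if, after deleting all other letters from $w$, the resulting word is of the form $xyxy\cdots$ or $yxyx\cdots$ (of even or odd length). A graph $G=(V,E)$ is word-representable if there is a word $w$ over the alphabet $V$, containing every letter of $V$ at least once, such that for all distinct $x,y\in V$, $xy\in E$ if and only if $x$ and $y$ alternate in $w$. For an integer $m$ and a set $R$ of positive integers each at most $m/2$, the circulant graph $C_m(R)$ has vertex set $\{0,1,\dots,m-1\}$, with $i$ and $j$ adjacent iff $\min(|i-j|,\,m-|i-j|)\in R$. $C_{2n}(x,1,n)$ denotes the circulant graph on $2n$ vertices with jump set $\{1,x,n\}$; it is $5$-regular exactly when $1<x<n$. *)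

From mathcomp Require Import all_boot.
Set Implicit Arguments. Unset Strict Implicit. Unset Printing Implicit Defensive.

Definition alt_word (T : Type) (a b : T) (k : nat) : seq T :=
  mkseq (fun i => if odd i then b else a) k.

Definition alternate (T : eqType) (a b : T) (w : seq T) : Prop :=
  let u := [seq c <- w | (c == a) || (c == b)] in
  exists k, u = alt_word a b k \/ u = alt_word b a k.

Definition word_representable (T : finType) (E : rel T) : Prop :=
  exists w : seq T, (forall v : T, v \in w) /\
    (forall a b : T, a != b -> (E a b <-> alternate a b w)).

(* Circulant graph C_m(R) on vertices 0..m-1: i ~ j iff min(|i-j|, m-|i-j|) \in R. *)
Definition circ_adj (m : nat) (R : pred nat) : rel 'I_m :=
  fun i j => let d := ((i - j) + (j - i))%N in R (minn d (m - d)).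

Definition jumps_1xn (x n : nat) : pred nat :=
  fun d => [|| d == 1, d == x | d == n].
Arguments circ_adj m R : clear implicits.

From mathcomp Require Import all_boot zify.
Set Implicit Arguments. Unset Strict Implicit. Unset Printing Implicit Defensive.

(* Every graph with a proper 3-colouring is word-representable.  List each
   colour class V0, V1, V2 in a fixed order and concatenate blocks in which
   every letter occurs exactly twice.  Restricted to an edge xy with
   col x < col y every block reads xyxy, so x and y alternate.  A non-edge ab
   is detected by a block in which two copies of a letter become adjacent:
   V0 V1 V2 followed by the reversed classes when col a = col b, and otherwise
   a block in which one of the two vertices is moved into the class of the
   other, between its neighbours and its non-neighbours there.

   The circulant graph is 3-coloured by sectors: vertex a of C_m, m = 2n,
   gets the colour floor(N a / m) mod 3, i.e. the third of the circle R/Z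
   containing a N / (3m).  For 3 | N this is well defined modulo m, and it is
   proper as soon as each jump L in {1, x, n} turns the circle by an amount in
   [1/3, 2/3] modulo 1.  With n = 2x + 3t, the value N = 2n + 12J + 5 does
   it, J being the least integer with x < 18tJ + 6t. *)

Definition stutters (T : Type) (s : seq T) : Prop :=
  exists s1 s2 c, s = s1 ++ c :: c :: s2.

Lemma stutters_flatten (T : eqType) (ss : seq (seq T)) (s : seq T) :
  s \in ss -> stutters s -> stutters (flatten ss).
Proof.
case/splitPr=> ss1 ss2 [s1 [s2 [c ->]]].
by exists (flatten ss1 ++ s1), (s2 ++ flatten ss2), c; rewrite flatten_cat /= -!catA.
Qed.

Lemma stutters_cat_rev (T : Type) (s : seq T) : 0 < size s -> stutters (s ++ rev s).
Proof.
case/lastP: s => // s c _.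
by exists s, (rev s), c; rewrite rev_rcons cat_rcons.
Qed.

Lemma alt_wordS (T : Type) (a b : T) k : alt_word a b k.+1 = a :: alt_word b a k.
Proof.
rewrite /alt_word /mkseq /= (iotaDl 1 0) -map_comp; congr (_ :: _).
by apply: eq_map => i /=; case: odd.
Qed.

Lemma alt_word_stuttersN (T : Type) (a b : T) k : a <> b -> ~ stutters (alt_word a b k).
Proof.
elim: k a b => [|k IHk] a b neq_ab [s1 [s2 [c]]]; first by case: s1.
rewrite alt_wordS; case: s1 => [|d s1] /= [eq_ad].
- case: k {IHk} => [|k]; rewrite ?alt_wordS // => -[eq_bc _].
  by apply: neq_ab; rewrite eq_ad eq_bc.
- by move=> e; apply: (IHk b a); [exact: nesym | exists s1, s2, c].
Qed.

Lemma alternate_sym (T : eqType) (a b : T) (w : seq T) :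
  alternate a b w -> alternate b a w.
Proof.
rewrite /alternate (@eq_filter _ _ (pred2 b a)) => [[k e]|c]; last exact: orbC.
by exists k; rewrite or_comm.
Qed.

Lemma alternate_stuttersN (T : eqType) (a b : T) (w : seq T) :
  a != b -> alternate a b w -> ~ stutters [seq c <- w | pred2 a b c].
Proof.
move=> /eqP neq_ab [k [-> | ->]]; apply: alt_word_stuttersN => //; exact: nesym.
Qed.

Lemma alternate_flatten (T : eqType) (a b : T) (ss : seq (seq T)) :
  (forall s, s \in ss -> [seq c <- s | pred2 a b c] = [:: a; b; a; b]) ->
  alternate a b (flatten ss).
Proof.
move=> abab; exists (4 * size ss); left.
elim: ss abab => [|s ss IHss] abab //=.
have abab_ss t : t \in ss -> [seq c <- t | pred2 a b c] = [:: a; b; a; b].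
  by move=> t_ss; rewrite abab // inE t_ss orbT.
by rewrite filter_cat abab ?mem_head // IHss // mulnS !alt_wordS.
Qed.

Section ThreeColoring.

Variables (T : finType) (E : rel T) (col : T -> nat).
Hypothesis E_sym : symmetric E.
Hypothesis col_proper : forall a b, E a b -> col a != col b.
Hypothesis col_lt3 : forall a, col a < 3.

Definition class k (P : pred T) := [seq z <- enum T | (col z == k) && P z].

Lemma filter_class k P x y : col x != col y ->
  [seq z <- class k P | pred2 x y z] = [seq z <- [:: x; y] | (col z == k) && P z].
Proof.
move=> neq_col; have neq_xy : x != y by apply: contraNneq neq_col => ->.
set Q := fun z => (col z == k) && P z.
have not_both : ~~ (Q x && Q y).
  by apply: contra neq_col => /andP[/andP[/eqP-> _] /andP[/eqP-> _]].
have -> : [seq z <- class k P | pred2 x y z] = [seq z <- [seq z <- enum T | pred2 x y z] | Q z].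
  by rewrite /class -!filter_predI; apply: eq_filter => z /=; rewrite (andbC (_ || _)).
apply: perm_small_eq; first by move: not_both => /=; case: (Q x); case: (Q y).
apply: perm_filter; apply: uniq_perm.
- by rewrite filter_uniq ?enum_uniq.
- by rewrite /= inE neq_xy.
- by move=> z; rewrite mem_filter mem_enum andbT !inE.
Qed.

Lemma filter_class_same k a b : col a = col b ->
  [seq z <- class k predT | pred2 a b z] =
  if col a == k then [seq z <- enum T | pred2 a b z] else [::].
Proof.
move=> eq_col; rewrite /class -filter_predI.
have col_ab z : pred2 a b z -> col z = col a by case/orP=> /eqP->.
case: eqP => [<-|neq_k].
- apply: eq_filter => z /=; case ab: (_ || _) => //=.
  by rewrite col_ab ?eqxx.
- rewrite -[RHS](filter_pred0 (enum T)); apply: eq_filter => z /=.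
  case ab: (_ || _) => //=.
  by rewrite col_ab // andbT; apply/eqP.
Qed.

Definition frame :=
  class 0 predT ++ class 1 predT ++ class 2 predT ++
  rev (class 0 predT) ++ rev (class 1 predT) ++ rev (class 2 predT).

Lemma mem_frame v : v \in frame.
Proof.
have v_in : v \in class (col v) predT by rewrite mem_filter eqxx mem_enum.
by rewrite !mem_cat; have := col_lt3 v; case: (col v) v_in => [|[|[|]]] // ->; rewrite ?orbT.
Qed.

Definition piece01 u :=
  class 0 predT ++ class 1 predT ++ class 2 predT ++
  class 0 (predC1 u) ++ class 1 (predC (E u)) ++ [:: u] ++ class 1 (E u) ++ class 2 predT.

Definition piece02 u :=
  class 0 predT ++ class 1 predT ++ class 2 (E u) ++ [:: u] ++
  class 2 (predC (E u)) ++ class 0 (predC1 u) ++ class 1 predT ++ class 2 predT.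

Definition piece12 v :=
  class 0 predT ++ class 1 (E v) ++ [:: v] ++ class 1 (predC (E v)) ++
  class 2 (predC1 v) ++ class 0 predT ++ class 1 predT ++ class 2 predT.

Definition pieces :=
  frame :: [seq piece01 u | u <- enum T & col u == 0] ++
  [seq piece02 u | u <- enum T & col u == 0] ++ [seq piece12 v | v <- enum T & col v == 2].

Lemma pieces_edge x y p : E x y -> col x < col y -> p \in pieces ->
  [seq z <- p | pred2 x y z] = [:: x; y; x; y].
Proof.
move=> Exy lt_col; have Eyx : E y x by rewrite E_sym.
have neq_col : col x != col y by rewrite neq_ltn lt_col.
have [[cx cy]|[[cx cy]|[cx cy]]] :
  [/\ col x = 0 & col y = 1] \/ [/\ col x = 0 & col y = 2] \/ [/\ col x = 1 & col y = 2].
  by have := col_lt3 y; lia.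
all: rewrite inE !mem_cat => /or4P[/eqP-> | | |];
  [by rewrite /frame !filter_cat !filter_rev !filter_class //= cx cy
  | move=> /mapP[u]; rewrite mem_filter => /andP[/eqP cu _] -> ..].
all: rewrite /piece01 /piece02 /piece12 !filter_cat !filter_class //= cx cy /=.
all: have [eq_xu|neq_xu] := eqVneq x u; first by subst u; rewrite cx in cu; rewrite ?eqxx ?Exy.
all: have [eq_yu|neq_yu] := eqVneq y u; first by subst u; rewrite cy in cu; rewrite ?eqxx ?Eyx.
all: by rewrite ?(eq_sym u) ?(negbTE neq_xu) ?(negbTE neq_yu); case: (E u x); case: (E u y).
Qed.

Lemma pieces_nonedge a b : a != b -> ~~ E a b ->
  exists2 p, p \in pieces & stutters [seq z <- p | pred2 a b z].
Proof.
wlog le_col : a b / col a <= col b.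
  move=> wlog_ab neq_ab nEab; have [le_ab|/ltnW le_ba] := leqP (col a) (col b).
    exact: wlog_ab.
  have [p p_in st] : exists2 p, p \in pieces & stutters [seq z <- p | pred2 b a z].
    by apply: wlog_ab; rewrite // 1?eq_sym 1?E_sym.
  by exists p; rewrite // (@eq_filter _ _ (pred2 b a)) // => z; exact: orbC.
move=> neq_ab nEab; rewrite leq_eqVlt in le_col.
case/orP: le_col => [/eqP eq_col|lt_col].
- exists frame; first exact: mem_head.
  have l_gt0 : 0 < size [seq z <- enum T | pred2 a b z].
    by rewrite size_filter -has_count; apply/hasP; exists a; rewrite ?mem_enum /= ?eqxx.
  rewrite /frame !filter_cat !filter_rev !filter_class_same //.
  have col_a : col a = 0 \/ col a = 1 \/ col a = 2 by have := col_lt3 a; lia.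
  by case: col_a => [|[|]] ca; rewrite ca /= ?cats0; apply: stutters_cat_rev.
have neq_col : col a != col b by rewrite neq_ltn lt_col.
have nEba : ~~ E b a by rewrite E_sym.
have [[ca cb]|[[ca cb]|[ca cb]]] :
  [/\ col a = 0 & col b = 1] \/ [/\ col a = 0 & col b = 2] \/ [/\ col a = 1 & col b = 2].
  by have := col_lt3 b; lia.
- exists (piece01 a); first by rewrite !inE !mem_cat map_f ?orbT // mem_filter ca mem_enum.
  rewrite /piece01 !filter_cat !filter_class //= ca cb /= eqxx (negbTE nEab) /=.
  by exists [:: a], [:: a], b.
- exists (piece02 a); first by rewrite !inE !mem_cat map_f ?orbT // mem_filter ca mem_enum.
  rewrite /piece02 !filter_cat !filter_class //= ca cb /= eqxx (negbTE nEab) /=.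
  by exists [::], [:: b; b], a.
- exists (piece12 b); first by rewrite !inE !mem_cat map_f ?orbT // mem_filter cb mem_enum.
  rewrite /piece12 !filter_cat !filter_class //= ca cb /= eqxx (negbTE nEba) orbT /=.
  by exists [:: b], [:: b], a.
Qed.

Theorem word_representable_of_3coloring : word_representable E.
Proof.
exists (flatten pieces); split.
  by move=> v; apply/flattenP; exists frame; [exact: mem_head | exact: mem_frame].
move=> a b neq_ab; split=> [Eab | alt_ab].
  wlog lt_col : a b neq_ab Eab / col a < col b.
    move=> wlog_ab; have := col_proper Eab; rewrite neq_ltn => /orP[|lt_ba]; first exact: wlog_ab.
    by apply: alternate_sym; apply: wlog_ab; rewrite // 1?eq_sym 1?E_sym.
  by apply: alternate_flatten => p; apply: pieces_edge.
apply/negPn/negP => nEab; have [p p_in st] := pieces_nonedge neq_ab nEab.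
apply: (alternate_stuttersN neq_ab alt_ab); rewrite filter_flatten.
by apply: (stutters_flatten (s := [seq z <- p | pred2 a b z])); rewrite // map_f.
Qed.

End ThreeColoring.

Lemma circ_adj_sym m (R : pred nat) : symmetric (circ_adj m R).
Proof. by move=> i j; rewrite /circ_adj addnC. Qed.

Lemma circ_adj_coloring m (R : pred nat) (g : nat -> nat) :
  (forall a, g (a + m) = g a) -> (forall a L, R L -> g (a + L) != g a) ->
  forall i j : 'I_m, circ_adj m R i j -> g i != g j.
Proof.
move=> g_per g_jump i j; wlog le_ij : i j / i <= j.
  move=> wlog_ij; have [|/ltnW le_ji] := leqP i j; first exact: wlog_ij.
  by rewrite circ_adj_sym eq_sym; apply: wlog_ij.
rewrite /circ_adj (eqP (le_ij : i - j == 0)) add0n.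
have lt_jm := ltn_ord j.
case: (leqP (j - i) (m - (j - i))) => [_ R_ji | _ R_mji].
  by rewrite -(subnKC le_ij) eq_sym g_jump.
by rewrite -g_per (_ : i + m = j + (m - (j - i))) ?g_jump //; lia.
Qed.

Definition sector N m a := N * a %/ m %% 3.

Definition sector_jump N m L :=
  let q := N * L %/ m in (q %% 3 == 1) || (q %% 3 == 2) && (m %| N * L).

Lemma sector_periodic N m a : 0 < m -> 3 %| N -> sector N m (a + m) = sector N m a.
Proof.
move=> m_gt0 /dvdnP[k ->]; rewrite /sector mulnDr divnDMl //.
by rewrite addnC modnMDl.
Qed.

Lemma sector_jump_neq N m a L : 0 < m -> sector_jump N m L -> sector N m (a + L) != sector N m a.
Proof.
move=> m_gt0; rewrite /sector_jump /sector mulnDr divnD // /dvdn.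
have : N * a %% m < m by rewrite ltn_pmod.
set A := N * a %/ m; set q := N * L %/ m; set r := N * L %% m.
lia.
Qed.

Lemma jumps_1xn_sector_jump n x :
  n %% 3 = 2 -> x %% 3 = 1 -> 2 * x < n ->
  exists2 N, 3 %| N & forall L, jumps_1xn x n L -> sector_jump N (2 * n) L.
Proof.
move=> n_mod3 x_mod3 lt_2x_n.
have [t def_n] : exists t, n = 2 * x + 3 * t by exists ((n - 2 * x) %/ 3); lia.
have t_gt0 : 0 < t by lia.
have [J J_lo J_hi] : exists2 J, J * (18 * t) <= x + 12 * t & x + 12 * t < J.+1 * (18 * t).
  by exists ((x + 12 * t) %/ (18 * t)); [exact: leq_divM | apply: ltn_ceil; lia].
have le_J_Jt : J <= J * t by rewrite leq_pmulr.
have J_le : J * (18 * t) <= 5 * x by case: (posnP J) => [-> | J_gt0]; nia.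
set K := 12 * J + 5.
have n_gt0 : 0 < n by lia.
have m_gt0 : 0 < 2 * n by lia.
have lt_K_m : K < 2 * n by rewrite /K def_n; nia.
have Kx_lo : 3 * J * (2 * n) <= K * x by rewrite /K def_n; nia.
have Kx_hi : K * x <= (3 * J + 1) * (2 * n) by rewrite /K def_n; nia.
exists (2 * n + K); first by rewrite /dvdn /K; apply/eqP; lia.
move=> L /or3P[] /eqP->; rewrite /sector_jump.
- by rewrite muln1 divnDl // divnn divn_small //; lia.
- rewrite mulnDl [2 * n * x]mulnC divnMDl // (dvdn_addr _ (dvdn_mull x (dvdnn _))) /dvdn.
  have q_lo : 3 * J <= K * x %/ (2 * n) by rewrite leq_divRL.
  have q_hi : K * x %/ (2 * n) < 3 * J + 2 by rewrite ltn_divLR //; lia.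
  have q_exact : K * x %/ (2 * n) = 3 * J + 1 -> K * x %% (2 * n) = 0.
    by move=> q_eq; have := divn_eq (K * x) (2 * n); rewrite q_eq; lia.
  move: q_lo q_hi q_exact; set q := K * x %/ (2 * n); set r := K * x %% (2 * n); lia.
- by rewrite (divnMr n_gt0); lia.
Qed.

Theorem theorem26 (n x : nat) :
  1 < x -> x < n ->
  n %% 3 = 2 -> x %% 3 = 1 -> 2 * x < n ->
  word_representable (circ_adj (2 * n) (jumps_1xn x n)).
Proof.
move=> _ _ n_mod3 x_mod3 lt_2x_n.
have [N N_3 N_jumps] := jumps_1xn_sector_jump n_mod3 x_mod3 lt_2x_n.
have m_gt0 : 0 < 2 * n by lia.
apply: (@word_representable_of_3coloring _ _ (fun i : 'I_(2 * n) => sector N (2 * n) i)).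
- exact: circ_adj_sym.
- apply: circ_adj_coloring => [a | a L /N_jumps]; [exact: sector_periodic | exact: sector_jump_neq].
- by move=> i; rewrite ltn_pmod.
Qed.
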